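(* Consider the lattice Boltzmann scheme described in the context under acoustic scaling ($\lambda>0$ fixed as $\Delta x\to0$), with a prepared initialisation $w_i=\sum_{\mathfrak{e}\in\mathbb{Z}^d}w_{i,\mathfrak{e}}x^{\mathfrak{e}}$, $i\in\{1,\dots,q\}$, where each sequence $(w_{i,\mathfrak{e}})_{\mathfrak{e}}\subset\mathbb{R}$ has finite support. Set $$\omega^{(0)}_i=\sum_{\mathfrak{e}}w_{i,\mathfrak{e}},\qquad \omega^{(1)}_i=-\sum_{|\mathfrak{n}|=1}\Big(\sum_{\mathfrak{e}}w_{i,\mathfrak{e}}\mathfrak{e}^{\mathfrak{n}}\Big)\partial_x^{\mathfrak{n}},$$ so that $w_i$ applied to smooth functions expands as $\omega_i^{(0)}+\Delta x\,\omega_i^{(1)}+O(\Delta x^2)$. Then for every $n\in\mathbb{N}^*$ and $x\in\mathbb{R}^d$ the modified equation of the $n$-th starting scheme is \begin{align*} \phi(0,x)&+n\frac{\Delta x}{\lambda}\partial_t\phi(0,x)+O(\Delta x^2)=\omega^{(0)}_1\phi(0,x)\\ &-n\Delta x\Big(\mathcal{G}_{11}\omega^{(0)}_1+\sum_{r=2}^q\mathcal{G}_{1r}\omega^{(0)}_r+\frac1n\sum_{r=2}^q\mathcal{G}_{1r}(\epsilon_r\omega^{(0)}_1-\omega^{(0)}_r)\sum_{\ell=0}^{n-1}\pi_{n-\ell}(s_r)-\frac1n\omega^{(1)}_1\Big)\phi(0,x)+O(\Delta x^2), \end{align*} where $\pi_\ell(X)=1-(1-X)^\ell$.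
   Context: Fix $d\ge1$, $q\ge1$, velocities $c_1,\dots,c_q\in\mathbb{Z}^d$, invertible $M\in GL_q(\mathbb{R})$, $S=\mathrm{diag}(s_1,\dots,s_q)$ with $s_i\in(0,2]$ for $i\ge2$, $s_1\in\mathbb{R}$, $\epsilon\in\mathbb{R}^q$ with $\epsilon_1=1$, all independent of $\Delta x$; $K=I-S(I-\epsilon e_1^T)$. $\Delta t=\Delta x/\lambda$. Shifts $(x_\ell\phi)(x)=\phi(x-\Delta x e_\ell)$, multi-index notation $x^{\mathfrak{e}}=x_1^{\mathfrak{e}_1}\cdots x_d^{\mathfrak{e}_d}$, $\mathfrak{e}^{\mathfrak{n}}=\prod_\ell \mathfrak{e}_\ell^{\mathfrak{n}_\ell}$, $\partial_x^{\mathfrak{n}}=\prod_\ell\partial_{x_\ell}^{\mathfrak{n}_\ell}$. $T=M\mathrm{diag}(x^{c_1},\dots,x^{c_q})M^{-1}$, $E=TK$, time shift $(z\phi)(t)=\phi(t+\Delta t)$. $\mathcal{G}=M\mathrm{diag}(c_1\cdot\nabla,\dots,c_q\cdot\nabla)M^{-1}$. Initialisation $m(0,x)=w\,m_1^\circ(x)$ with $w$ a vector of Laurent polynomials in the shifts. The $n$-th starting scheme is $m_1(n\Delta t,x)=(E^nw)_1m_1^\circ(x)$; its modified equation is obtained by substituting a smooth $\phi$ for the unknowns in $(z^n\phi)(0,x)=((E^nw)_1\phi(0,\cdot))(x)$ and Taylor-expanding both sides in $\Delta x$. *)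

From HB Require Import structures.
From mathcomp Require Import all_boot all_order all_algebra.
From mathcomp Require Import all_classical all_reals all_analysis.
Set Implicit Arguments. Unset Strict Implicit. Unset Printing Implicit Defensive.
Import Order.TTheory GRing.Theory Num.Theory.
Import numFieldNormedType.Exports.
Local Open Scope ring_scope.

Section LBM.
Variable R : realType.

Fixpoint iterD (V : normedModType R) (vs : seq V) (f : V -> R) : V -> R :=
  if vs is v :: vs' then 'D_v (iterD vs' f) else f.

Definition smooth (V : normedModType R) (f : V -> R) :=
  forall vs : seq V, continuous (iterD vs f) /\
    forall (x v : V), derivable (iterD vs f) x v.

Variables d q : nat.
Notation V := 'rV[R]_d.

Definition vR (e : 'rV[int]_d) : V := map_mx intr e.

Definition unitv (l : 'I_d) : V := delta_mx 0 l.
Definition partial (l : 'I_d) (f : V -> R) : V -> R := 'D_(unitv l) f.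

(** shift operator x^e : (x^e f)(x) = f(x - dx e) *)
Definition shift (dx : R) (e : 'rV[int]_d) (f : V -> R) : V -> R :=
  fun y => f (y - dx *: vR e).

Definition mxact (A : 'M[R]_q) (u : 'I_q -> V -> R) : 'I_q -> V -> R :=
  fun i y => \sum_j A i j * u j y.

Definition Top (M : 'M[R]_q) (c : 'I_q -> 'rV[int]_d) (dx : R)
  (u : 'I_q -> V -> R) : 'I_q -> V -> R :=
  mxact M (fun j => shift dx (c j) (mxact (invmx M) u j)).

Definition Kmx (i1 : 'I_q) (s : 'rV[R]_q) (eps : 'cV[R]_q) : 'M[R]_q :=
  1%:M - diag_mx s *m (1%:M - eps *m delta_mx (0 : 'I_1) i1).

Definition Eop i1 M c s eps dx (u : 'I_q -> V -> R) : 'I_q -> V -> R :=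
  Top M c dx (mxact (Kmx i1 s eps) u).

Definition wop (w : 'I_q -> 'rV[int]_d -> R) (S : seq 'rV[int]_d) (dx : R)
  (f : V -> R) : 'I_q -> V -> R :=
  fun i y => \sum_(e <- S) w i e * shift dx e f y.

Definition start_scheme i1 M c s eps w S dx (n : nat) (f : V -> R) : V -> R :=
  iter n (Eop i1 M c s eps dx) (wop w S dx f) i1.

Definition omega0 (w : 'I_q -> 'rV[int]_d -> R) S (i : 'I_q) : R :=
  \sum_(e <- S) w i e.

(** omega^(1)_i f = - sum_{|n|=1} (sum_e w_{i,e} e^n) d^n f ;
    multi-indices with |n| = 1 are the unit vectors, e^{u_l} = e_l *)
Definition omega1 (w : 'I_q -> 'rV[int]_d -> R) S (i : 'I_q) (f : V -> R)
  : V -> R :=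
  fun y => - \sum_(l < d) (\sum_(e <- S) w i e * (e 0 l)%:~R) * partial l f y.

Definition Gop (M : 'M[R]_q) (c : 'I_q -> 'rV[int]_d) (i r : 'I_q)
  (f : V -> R) : V -> R :=
  fun y => \sum_j M i j * invmx M j r *
             \sum_(l < d) (c j 0 l)%:~R * partial l f y.

Definition pil (l : nat) (X : R) : R := 1 - (1 - X) ^+ l.

End LBM.

From Pilot Require Import Defs.
From HB Require Import structures.
From mathcomp Require Import all_boot all_order all_algebra.
From mathcomp Require Import all_classical all_reals all_analysis.
From mathcomp Require Import ring lra.
Set Implicit Arguments. Unset Strict Implicit. Unset Printing Implicit Defensive.
Import Order.TTheory GRing.Theory Num.Theory.
Import numFieldNormedType.Exports.
Local Open Scope ring_scope.
Local Open Scope classical_set_scope.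

(* Every operator of the scheme acts on a smooth function as a finite combination
   [sum_k a_k f (x - dx v_k)] of weighted shifts, which expands as
   [(sum_k a_k) f x - dx (sum_k a_k v_k . grad f x) + O(dx^2)], so only the mass and
   the first moment of the combination representing (E^n w)_i matter.  The masses
   evolve by m_(n+1) = K m_n, hence m_(n,r) = om0_r + pi_n(s_r) (eps_r om0_1 - om0_r).
   Since eps_1 = 1, the first row of K is e_1, so the first moment of (E^n w)_1
   grows at step n exactly by sum_k G_1k m_(n,k); summing these increments gives
   the formula.  The left-hand side is a first-order Taylor expansion in time. *)

Section BigOSquare.
Variable R : realType.

Definition bigO_sq (f : R -> R) :=
  exists δ B : R, 0 < δ /\ forall h, 0 < h < δ -> `|f h| <= B * h ^+ 2.

Lemma bigO_sq_eqO f : bigO_sq f -> f =O_ (at_right (0:R)) (fun h => h ^+ 2).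
Proof.
move=> [δ [B [δ0 fB]]]; apply/eqO_exP; exists (`|B| + 1); first exact: ltr_pwDr.
exists δ => //= h /=; rewrite sub0r normrN => hδ h0.
rewrite gtr0_norm // in hδ; apply: le_trans (fB h _) _; first by rewrite h0.
have h2 : 0 <= h ^+ 2 by rewrite exprn_ge0 ?ltW.
by rewrite (ger0_norm h2) ler_wpM2r // (le_trans (ler_norm B)) // lerDl.
Qed.

Lemma eq_bigO_sq f g : (forall h, 0 < h -> f h = g h) -> bigO_sq f -> bigO_sq g.
Proof.
move=> fg [δ [B [δ0 fB]]]; exists δ, B; split => // h /[dup] /andP[h0 _].
by rewrite -fg //; exact: fB.
Qed.

Lemma bigO_sqD f g : bigO_sq f -> bigO_sq g -> bigO_sq (fun h => f h + g h).
Proof.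
move=> [δf [Bf [δf0 fB]]] [δg [Bg [δg0 gB]]].
exists (Num.min δf δg), (Bf + Bg); split; first by rewrite lt_min δf0.
move=> h /andP[h0]; rewrite lt_min => /andP[hf hg].
rewrite (le_trans (ler_normD _ _)) // mulrDl.
by rewrite lerD ?fB ?gB ?h0.
Qed.

Lemma bigO_sqZ a f : bigO_sq f -> bigO_sq (fun h => a * f h).
Proof.
move=> [δ [B [δ0 fB]]]; exists δ, (`|a| * B); split => // h hδ.
by rewrite normrM -mulrA ler_wpM2l ?fB.
Qed.

Lemma bigO_sq_sum (T : Type) (s : seq T) (F : T -> R -> R) :
  (forall t, bigO_sq (F t)) -> bigO_sq (fun h => \sum_(t <- s) F t h).
Proof.
move=> FO; elim: s => [|t s IHs].
  by exists 1, 0; split => // h _; rewrite big_nil normr0 mul0r.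
by apply: eq_bigO_sq (bigO_sqD (FO t) IHs) => h _; rewrite big_cons.
Qed.

Lemma bigO_sq_scale a f : 0 < a -> bigO_sq f -> bigO_sq (fun h => f (a * h)).
Proof.
move=> a0 [δ [B [δ0 fB]]]; exists (δ / a), (B * a ^+ 2); split.
  by rewrite divr_gt0.
move=> h /andP[h0 hδ]; rewrite -mulrA -exprMn fB // mulr_gt0 //=.
by rewrite mulrC -ltr_pdivlMr.
Qed.

Lemma is_derive_within_continuous (k dk : R -> R) (a b : R) :
  (forall t : R, is_derive t 1 k (dk t)) -> {within `[a, b], continuous k}.
Proof. by move=> kd; apply: derivable_within_continuous => t _; exact: ex_derive. Qed.

(* Two mean value steps: [g h - g 0 - h g1 0 = h (g1 x1 - g1 0) = h x1 g2 x2]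
   with [0 < x2 < x1 < h]. *)
Lemma taylor1_bigO_sq (g g1 g2 : R -> R) :
  (forall t : R, is_derive t 1 g (g1 t)) -> (forall t : R, is_derive t 1 g1 (g2 t)) ->
  {for 0, continuous g2} -> bigO_sq (fun h => g h - g 0 - h * g1 0).
Proof.
move=> gd g1d g2c.
have [δ δ0 g2B] : exists2 δ : R, 0 < δ & forall t, `|t| < δ -> `|g2 t| <= `|g2 0| + 1.
  have /nbhs_ballP[δ δ0 near0] : \forall t \near 0, `|g2 0 - g2 t| < 1.
    by move/cvgrPdist_lt : g2c; apply.
  exists δ => // t tδ; have := near0 t; rewrite /ball /= sub0r normrN => /(_ tδ) lt1.
  by rewrite -[g2 t](subKr (g2 0)) (le_trans (ler_normB _ _)) // lerD2l ltW.
exists δ, (`|g2 0| + 1); split => // h /andP[h0 hδ].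
have [x1 /[!in_itv]/= /andP[x10 x1h] ->] :=
  MVT h0 (fun t _ => gd t) (is_derive_within_continuous gd).
have [x2 /[!in_itv]/= /andP[x20 x2x1] g1E] :=
  MVT x10 (fun t _ => g1d t) (is_derive_within_continuous g1d).
have -> : g1 x1 * (h - 0) - h * g1 0 = h * (x1 * g2 x2).
  by rewrite -[g1 x1](subrK (g1 0)) g1E; ring.
rewrite normrM (gtr0_norm h0) normrM (gtr0_norm x10) expr2 [leRHS]mulrCA.
rewrite ler_pM2l // mulrC (ler_pM (normr_ge0 _) (ltW x10) _ (ltW x1h)) //.
rewrite g2B // gtr0_norm //.
by rewrite (lt_trans x2x1) // (lt_trans x1h).
Qed.

End BigOSquare.

Section DirectionalDerivative.
Variables (R : realType) (W : normedModType R).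
Implicit Types (f : W -> R) (a v : W).

Let line_quotientE f a v (t : R) :
  (fun h : R => h^-1 *: (((fun s => f (a + s *: v)) \o shift t) (h *: 1)
                         - f (a + t *: v))) =
  (fun h : R => h^-1 *: ((f \o shift (a + t *: v)) (h *: v) - f (a + t *: v))).
Proof.
apply/funext => h /=; congr (_ *: (f _ - _)).
by rewrite -[h *: 1]/(h * 1) mulr1 scalerDl addrCA.
Qed.

Lemma derive_lineE f a v (t : R) :
  'D_v f (a + t *: v) = 'D_1 (fun s : R => f (a + s *: v)) t.
Proof. by rewrite /derive line_quotientE. Qed.

Lemma derivable_lineE f a v (t : R) :
  derivable f (a + t *: v) v = derivable (fun s : R => f (a + s *: v)) t 1.
Proof. by rewrite /derivable line_quotientE. Qed.

Lemma is_derive_line f a v (t : R) : derivable f (a + t *: v) v ->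
  is_derive t 1 (fun s : R => f (a + s *: v)) ('D_v f (a + t *: v)).
Proof. by rewrite derivable_lineE => df; apply: DeriveDef; rewrite ?derive_lineE. Qed.

Lemma mvt_line f a v (h : R) : 0 < h -> (forall t : R, derivable f (a + t *: v) v) ->
  exists2 xi : R, 0 < xi < h & f (a + h *: v) - f a = h * 'D_v f (a + xi *: v).
Proof.
move=> h0 df; have gd t := is_derive_line (df t).
have [xi /[!in_itv]/= xih] := MVT h0 (fun t _ => gd t) (is_derive_within_continuous gd).
by rewrite scale0r addr0 subr0 mulrC => ->; exists xi.
Qed.

Lemma derive_dirZ f x v (k : R) : derivable f x v -> 'D_(k *: v) f x = k * 'D_v f x.
Proof.
move=> df; pose g s := f (x + s *: v).
have gE : 'D_v f x = 'D_1 g 0 by have := derive_lineE f x v 0; rewrite scale0r addr0.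
have gd : derivable g 0 1 by rewrite -derivable_lineE scale0r addr0.
have kd : is_derive (0 : R) 1 ( *%R k) k.
  by have := is_deriveZ k (is_derive_id (0 : R) 1); rewrite [k *: 1]mulr1.
have := derive_lineE f x (k *: v) 0; rewrite scale0r addr0 => ->.
have -> : (fun s => f (x + s *: (k *: v))) = g \o ( *%R k).
  by apply/funext => s; rewrite /g /= scalerA mulrC.
rewrite -derive1E derive1_comp ?mulr0 // ?(@ex_derive _ _ _ _ _ _ _ kd) // !derive1E gE.
by rewrite (@derive_val _ _ _ _ _ _ _ kd) mulrC.
Qed.

Lemma derive_dirD f x u v :
  (forall z, derivable f z v) -> derivable f x u -> derivable f x (u + v) ->
  {for x, continuous ('D_v f)} -> 'D_(u + v) f x = 'D_u f x + 'D_v f x.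
Proof.
move=> dv du duv Dvc.
pose quot w (h : R) := h^-1 *: ((f \o shift x) (h *: w) - f x).
have quot_cvg w : derivable f x w -> quot w h @[h --> 0^'+] --> 'D_w f x.
  by move=> dw A /dw[e e0 eA]; exists e => // h hx h0; apply: eA => //; exact: lt0r_neq0.
have quotB_cvg : quot (u + v) h - quot u h @[h --> 0^'+] --> 'D_v f x.
  apply/cvgrPdist_lt => e e0.
  have /nbhs_ballP[r r0 Dv_near] : \forall y \near x, `|'D_v f x - 'D_v f y| < e.
    by move/cvgrPdist_lt : Dvc; apply.
  pose K := `|u| + `|v| + 1.
  have K0 : 0 < K by rewrite ltr_wpDl // addr_ge0.
  exists (r / K) => [|h /=]; first by rewrite /= divr_gt0.
  rewrite sub0r normrN => hr h0; rewrite gtr0_norm // in hr.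
  have [xi /andP[xi0 xih] fE] := @mvt_line f (x + h *: u) v h h0 (fun t => dv _).
  have -> : quot (u + v) h - quot u h = 'D_v f (x + h *: u + xi *: v).
    rewrite /quot /= -scalerBr.
    have -> : h *: (u + v) + x = x + h *: u + h *: v by rewrite scalerDr addrC addrA.
    rewrite [h *: u + x]addrC opprB addrA subrK fE.
    by rewrite -[h^-1 *: _]/(h^-1 * _) mulKf ?gt_eqF.
  apply: Dv_near; rewrite -ball_normE /= -addrA opprD addrA subrr add0r normrN.
  rewrite (le_lt_trans (ler_normD _ _)) // !normrZ !gtr0_norm //.
  have hK : h * K < r by rewrite -ltr_pdivlMr.
  have xiv : xi * `|v| <= h * `|v| by rewrite ler_wpM2r // ltW.
  rewrite /K in hK; nra.
have DE : 'D_(u + v) f x - 'D_u f x = 'D_v f x.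
  apply: cvg_unique (cvgB (quot_cvg _ duv) (quot_cvg _ du)) quotB_cvg.
  exact: norm_hausdorff.
by rewrite -DE addrCA subrr addr0.
Qed.

Lemma derive_dir_sum f x (I : Type) (s : seq I) (F : I -> W) : smooth f ->
  'D_(\sum_(i <- s) F i) f x = \sum_(i <- s) 'D_(F i) f x.
Proof.
move=> sf; have df z w : derivable f z w := (sf [::]).2 z w.
elim: s => [|i s IHs]; first by rewrite !big_nil -(scale0r (0 : W)) derive_dirZ // mul0r.
by rewrite !big_cons derive_dirD ?IHs //; exact: (sf [:: _]).1.
Qed.

Lemma taylor_line f a v : smooth f ->
  bigO_sq (fun h : R => f (a + h *: v) - f a - h * 'D_v f a).
Proof.
move=> sf.
have fd t := is_derive_line ((sf [::]).2 (a + t *: v) v).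
have Dfd t := is_derive_line ((sf [:: v]).2 (a + t *: v) v).
have D2fc : {for 0, continuous (fun t : R => 'D_v ('D_v f) (a + t *: v))}.
  have lc : (fun t : R => a + t *: v) @ 0 --> a + 0 *: v.
    by apply: cvgD; [exact: cvg_cst | exact: scalel_continuous].
  exact: continuous_comp lc ((sf [:: v; v]).1 _).
by apply: eq_bigO_sq (taylor1_bigO_sq fd Dfd D2fc) => h _; rewrite scale0r addr0.
Qed.

End DirectionalDerivative.

Section Slice.
Variables (R : realType) (W : normedModType R) (t : R).
Implicit Types G : R * W -> R.

Let slice_quotientE G (y v : W) :
  (fun h : R => h^-1 *: (((fun z => G (t, z)) \o shift y) (h *: v) - G (t, y))) =
  (fun h : R => h^-1 *: ((G \o shift (t, y)) (h *: (0, v)) - G (t, y))).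
Proof.
apply/funext => h /=; congr (_ *: (G _ - _)).
by apply/eqP; rewrite xpair_eqE /= scaler0 add0r !eqxx.
Qed.

Lemma derive_slice G (y v : W) : 'D_v (fun z => G (t, z)) y = 'D_((0 : R), v) G (t, y).
Proof. by rewrite /derive slice_quotientE. Qed.

Lemma derivable_slice G (y v : W) :
  derivable (fun z => G (t, z)) y v = derivable G (t, y) (0, v).
Proof. by rewrite /derivable slice_quotientE. Qed.

Lemma iterD_slice G (vs : seq W) :
  Defs.iterD vs (fun z => G (t, z)) = fun z => Defs.iterD [seq ((0 : R), v) | v <- vs] G (t, z).
Proof. by elim: vs => [|v vs IHvs] //=; rewrite IHvs; apply/funext => y; exact: derive_slice. Qed.

Lemma smooth_slice G : smooth G -> smooth (fun z => G (t, z)).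
Proof.
move=> sG vs; rewrite iterD_slice; have [Gc Gd] := sG [seq ((0 : R), v) | v <- vs].
split=> [y | y v]; last by rewrite derivable_slice.
have slice_cvg : (t, z) @[z --> y] --> (t, y).
  exact: (@cvg_pair _ _ _ (nbhs y) (nbhs t) (nbhs y) _ _ _ (fun=> t) id (cvg_cst _) cvg_id).
exact: continuous_comp slice_cvg (Gc _).
Qed.

End Slice.

Lemma taylor_fst (R : realType) (W : normedModType R) (phi : R -> W -> R) (y : W) :
  smooth (fun p : R * W => phi p.1 p.2) ->
  bigO_sq (fun h : R => phi h y - phi 0 y - h * 'D_1 (fun t => phi t y) 0).
Proof.
move=> phi_smooth.
have fst_line t : ((0 : R), y) + t *: ((1 : R), 0) = (t, y).
  by apply/eqP; rewrite xpair_eqE /= add0r [t%:A]mulr1 scaler0 addr0 !eqxx.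
apply: (eq_bigO_sq _ (taylor_line (0 : R, y) (1 : R, 0) phi_smooth)) => h _.
have := derive_lineE (fun p : R * W => phi p.1 p.2) (0, y) (1, 0) 0.
rewrite !fst_line => ->.
by congr (_ - _ * _); congr derive; apply/funext => t; rewrite fst_line.
Qed.

Section Partials.
Variables (R : realType) (d : nat).

Lemma derive_partial_sum (f : 'rV[R]_d -> R) (x u : 'rV[R]_d) : smooth f ->
  'D_u f x = \sum_(l < d) u 0 l * partial l f x.
Proof.
move=> sf; rewrite {1}(row_sum_delta u) derive_dir_sum //.
by apply: eq_bigr => l _; rewrite derive_dirZ //; exact: (sf [::]).2.
Qed.

Lemma taylor_shift (f : 'rV[R]_d -> R) (x u : 'rV[R]_d) : smooth f ->
  bigO_sq (fun h : R => f (x - h *: u) - f x + h * \sum_(l < d) u 0 l * partial l f x).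
Proof.
move=> sf; apply: eq_bigO_sq (taylor_line x (- u) sf) => h _.
rewrite scalerN derive_partial_sum // -mulrN -sumrN.
by congr (_ + _ * _); apply: eq_bigr => l _; rewrite mxE mulNr opprK.
Qed.

End Partials.

Section ShiftCombination.
Variables (R : realType) (d : nat).
Implicit Types (L : seq (R * 'rV[R]_d)) (g : 'I_d -> R) (f : 'rV[R]_d -> R).

(* A pair [(a, v)] stands for the weighted shift [a x^v] of the paper. *)
Definition comb_eval L (dx : R) f (y : 'rV[R]_d) : R :=
  \sum_(p <- L) p.1 * f (y - dx *: p.2).

Definition mass L : R := \sum_(p <- L) p.1.

Definition vdot g (v : 'rV[R]_d) : R := \sum_(l < d) v 0 l * g l.

Definition moment g L : R := \sum_(p <- L) p.1 * vdot g p.2.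

Definition comb_shift (a : R) (v : 'rV[R]_d) L := [seq (a * p.1, p.2 + v) | p <- L].

Lemma vdotD g u v : vdot g (u + v) = vdot g u + vdot g v.
Proof. by rewrite /vdot -big_split; apply: eq_bigr => l _; rewrite mxE mulrDl. Qed.

Lemma comb_eval_shift a v L dx f y :
  comb_eval (comb_shift a v L) dx f y = a * comb_eval L dx f (y - dx *: v).
Proof.
rewrite /comb_eval big_map mulr_sumr; apply: eq_bigr => p _ /=.
by rewrite scalerDr opprD addrA [y - _ - _]addrAC mulrA.
Qed.

Lemma mass_shift a v L : mass (comb_shift a v L) = a * mass L.
Proof. by rewrite /mass big_map mulr_sumr. Qed.

Lemma moment_shift g a v L :
  moment g (comb_shift a v L) = a * (moment g L + mass L * vdot g v).
Proof.
rewrite /moment /mass big_map mulr_suml -big_split mulr_sumr.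
by apply: eq_bigr => p _ /=; rewrite vdotD; ring.
Qed.

Lemma comb_eval_taylor L f x : smooth f ->
  bigO_sq (fun h => comb_eval L h f x
                    - (mass L * f x - h * moment (fun l => partial l f x) L)).
Proof.
move=> sf; apply: eq_bigO_sq (bigO_sq_sum L (fun p => bigO_sqZ p.1 (taylor_shift x p.2 sf))).
move=> h _; rewrite /comb_eval /mass /moment /vdot.
elim: L => [|p L IHL]; first by rewrite !big_nil; ring.
by rewrite !big_cons IHL; ring.
Qed.

End ShiftCombination.

Lemma sum_mulmxE (R : pzSemiRingType) m n p (A : 'M[R]_(m, n)) (B : 'M[R]_(n, p))
    (X : 'I_p -> R) (j : 'I_m) :
  \sum_r (A *m B) j r * X r = \sum_k A j k * \sum_r B k r * X r.
Proof.
under eq_bigr do rewrite mxE mulr_suml.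
rewrite exchange_big; apply: eq_bigr => k _; rewrite mulr_sumr.
by apply: eq_bigr => r _; rewrite mulrA.
Qed.

Section Scheme.
Variables (R : realType) (d q : nat) (i1 : 'I_q) (M : 'M[R]_q) (c : 'I_q -> 'rV[int]_d).
Variables (s : 'rV[R]_q) (eps : 'cV[R]_q) (w : 'I_q -> 'rV[int]_d -> R) (S : seq 'rV[int]_d).
Hypothesis M_unit : M \in unitmx.
Hypothesis eps1 : eps i1 0 = 1.

Local Notation K := (Kmx i1 s eps).
Local Notation om0 := (omega0 w S).

Fixpoint scheme_comb (n : nat) (i : 'I_q) : seq (R * 'rV[R]_d) :=
  if n is n'.+1 then
    flatten [seq flatten [seq comb_shift (M i j * (invmx M *m K) j r) (vR R (c j))
                                         (scheme_comb n' r) | r <- index_enum 'I_q]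
            | j <- index_enum 'I_q]
  else [seq (w i e, vR R e) | e <- S].

Lemma big_scheme_comb_succ (F : R * 'rV[R]_d -> R) n i :
  \sum_(p <- scheme_comb n.+1 i) F p =
  \sum_j \sum_r \sum_(p <- comb_shift (M i j * (invmx M *m K) j r) (vR R (c j))
                                      (scheme_comb n r)) F p.
Proof. by rewrite big_flatten big_map; apply: eq_bigr => j _; rewrite big_flatten big_map. Qed.

Lemma sum_scheme_weights (X : 'I_q -> R) i :
  \sum_j \sum_r M i j * (invmx M *m K) j r * X r = \sum_r K i r * X r.
Proof.
rewrite -[in RHS](mulKVmx M_unit K) sum_mulmxE; apply: eq_bigr => j _.
by rewrite mulr_sumr; apply: eq_bigr => r _; rewrite mulrA.
Qed.

Lemma Kmx_sumE (X : 'I_q -> R) r :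
  \sum_k K r k * X k = X r - s 0 r * (X r - eps r 0 * X i1).
Proof.
have -> : \sum_k K r k * X k = (K *m \col_k X k) r 0.
  by rewrite mxE; apply: eq_bigr => k _; congr (_ * _); rewrite mxE.
rewrite /Kmx mulmxBl mul1mx -mulmxA mulmxBl mul1mx -mulmxA -rowE.
by rewrite mul_diag_mx !mxE big_ord1 !mxE.
Qed.

Lemma Kmx_sum_row1 (X : 'I_q -> R) : \sum_k K i1 k * X k = X i1.
Proof. by rewrite Kmx_sumE eps1 mul1r subrr mulr0 subr0. Qed.

Lemma scheme_combE n dx f y i :
  iter n (Eop i1 M c s eps dx) (wop w S dx f) i y = comb_eval (scheme_comb n i) dx f y.
Proof.
elim: n i y => [|n IHn] i y; first by rewrite /comb_eval big_map.
rewrite iterS /comb_eval big_scheme_comb_succ; apply: eq_bigr => j _.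
under [RHS]eq_bigr do rewrite -/(comb_eval _ _ _ _) comb_eval_shift -IHn.
by rewrite /Defs.shift /mxact -sum_mulmxE mulr_sumr; apply: eq_bigr => r _; rewrite mulrA.
Qed.

Lemma mass_scheme_succ n i :
  mass (scheme_comb n.+1 i) = \sum_k K i k * mass (scheme_comb n k).
Proof.
rewrite /mass big_scheme_comb_succ -sum_scheme_weights; apply: eq_bigr => j _.
by apply: eq_bigr => r _; rewrite -[\sum_(p <- comb_shift _ _ _) _]/(mass _) mass_shift.
Qed.

Lemma mass_scheme n r :
  mass (scheme_comb n r) = om0 r + pil n (s 0 r) * (eps r 0 * om0 i1 - om0 r).
Proof.
elim: n r => [|n IHn] r; first by rewrite /mass big_map /pil expr0 subrr mul0r addr0.
rewrite mass_scheme_succ Kmx_sumE !IHn eps1 /pil exprS; ring.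
Qed.

Lemma mass_scheme1 n : mass (scheme_comb n i1) = om0 i1.
Proof. by rewrite mass_scheme eps1 mul1r subrr mulr0 addr0. Qed.

Definition Gcoef (g : 'I_d -> R) (k : 'I_q) : R :=
  \sum_j M i1 j * invmx M j k * vdot g (vR R (c j)).

Lemma moment_scheme_succ g n : moment g (scheme_comb n.+1 i1) =
  moment g (scheme_comb n i1) + \sum_k Gcoef g k * mass (scheme_comb n.+1 k).
Proof.
rewrite [moment g _]/moment big_scheme_comb_succ.
under eq_bigr do under eq_bigr do rewrite -/(moment _ _) moment_shift mulrDr.
under eq_bigr do rewrite big_split /=.
rewrite big_split /= sum_scheme_weights Kmx_sum_row1; congr (_ + _).
under [RHS]eq_bigr do rewrite mass_scheme_succ /Gcoef mulr_suml.
rewrite [RHS]exchange_big; apply: eq_bigr => j _.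
transitivity (M i1 j * vdot g (vR R (c j)) *
              \sum_r (invmx M *m K) j r * mass (scheme_comb n r)).
  by rewrite mulr_sumr; apply: eq_bigr => r _; ring.
by rewrite sum_mulmxE mulr_sumr; apply: eq_bigr => k _; ring.
Qed.

Lemma moment_scheme_telescope g n : moment g (scheme_comb n i1) =
  moment g (scheme_comb 0 i1) + \sum_k Gcoef g k * \sum_(m < n) mass (scheme_comb m.+1 k).
Proof.
elim: n => [|n IHn]; first by rewrite big1 ?addr0 // => k _; rewrite big_ord0 mulr0.
rewrite moment_scheme_succ IHn -addrA -big_split; congr (_ + _).
by apply: eq_bigr => k _ /=; rewrite big_ord_recr mulrDr.
Qed.

Lemma sum_mass_scheme k n : \sum_(m < n) mass (scheme_comb m.+1 k) =
  n%:R * om0 k + (eps k 0 * om0 i1 - om0 k) * \sum_(l < n) pil (n - l) (s 0 k).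
Proof.
under eq_bigr do rewrite mass_scheme.
rewrite big_split sumr_const card_ord /= mulr_natl -mulr_suml mulrC.
congr (_ + _ * _); rewrite (reindex_inj rev_ord_inj); apply: eq_bigr => l _ /=.
by rewrite subnSK.
Qed.

Lemma moment_scheme g n : moment g (scheme_comb n i1) =
  moment g (scheme_comb 0 i1)
  + n%:R * (om0 i1 * Gcoef g i1 + \sum_(r < q | r != i1) om0 r * Gcoef g r)
  + \sum_(r < q | r != i1) (eps r 0 * om0 i1 - om0 r) * Gcoef g r
                          * \sum_(l < n) pil (n - l) (s 0 r).
Proof.
rewrite moment_scheme_telescope (bigD1 i1) //= sum_mass_scheme eps1 mul1r subrr.
rewrite mul0r addr0; under eq_bigr do rewrite sum_mass_scheme.
have -> : \sum_(r < q | r != i1) Gcoef g r * (n%:R * om0 r +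
             (eps r 0 * om0 i1 - om0 r) * \sum_(l < n) pil (n - l) (s 0 r)) =
          n%:R * \sum_(r < q | r != i1) om0 r * Gcoef g r
          + \sum_(r < q | r != i1) (eps r 0 * om0 i1 - om0 r) * Gcoef g r
                                  * \sum_(l < n) pil (n - l) (s 0 r).
  by rewrite mulr_sumr -big_split; apply: eq_bigr => r _ /=; ring.
ring.
Qed.

Lemma moment_scheme0 f x :
  moment (fun l => partial l f x) (scheme_comb 0 i1) = - omega1 w S i1 f x.
Proof.
rewrite /omega1 opprK /moment big_map /vdot; under eq_bigr do rewrite mulr_sumr.
rewrite exchange_big; apply: eq_bigr => l _; rewrite mulr_suml.
by apply: eq_bigr => e _; rewrite /vR mxE mulrA.
Qed.

Lemma Gcoef_partial f x : Gcoef (fun l => partial l f x) = fun k => Gop M c i1 k f x.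
Proof.
apply/funext => k; apply: eq_bigr => j _; congr (_ * _).
by apply: eq_bigr => l _; rewrite /vR mxE.
Qed.

End Scheme.

Theorem proposition2 (R : realType) (d q : nat) (hd : (0 < d)%N) (hq : (0 < q)%N)
  (c : 'I_q -> 'rV[int]_d) (M : 'M[R]_q) (s : 'rV[R]_q) (eps : 'cV[R]_q)
  (lambda : R) (w : 'I_q -> 'rV[int]_d -> R) (S : seq 'rV[int]_d) :
  let i1 : 'I_q := Ordinal hq in
  M \in unitmx ->
  (forall i : 'I_q, i != i1 -> 0 < s 0 i <= 2) ->
  eps i1 0 = 1 ->
  0 < lambda ->
  uniq S -> (forall i e, e \notin S -> w i e = 0) ->
  forall (n : nat), (0 < n)%N ->
  forall (phi : R -> 'rV[R]_d -> R),
  smooth (fun p : R * 'rV[R]_d => phi p.1 p.2) ->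
  forall x : 'rV[R]_d,
  (* left-hand side: (z^n phi)(0,x) = phi(n dt, x), dt = dx / lambda *)
  (fun dx : R => phi (n%:R * (dx / lambda)) x
      - (phi 0 x + n%:R * (dx / lambda) * 'D_1 (fun t => phi t x) 0))
    =O_ (at_right (0:R)) (fun dx : R => dx ^+ 2)
  /\
  (* right-hand side: ((E^n w)_1 phi(0,.))(x) *)
  (let psi := phi 0 in
   let om0 := omega0 w S in
   (fun dx : R => start_scheme i1 M c s eps w S dx n psi x
      - (om0 i1 * psi x
         - n%:R * dx *
           (om0 i1 * Gop M c i1 i1 psi x
            + \sum_(r < q | r != i1) om0 r * Gop M c i1 r psi x
            + n%:R^-1 * \sum_(r < q | r != i1)
                 (eps r 0 * om0 i1 - om0 r) * Gop M c i1 r psi x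
                 * \sum_(l < n) pil (n - l) (s 0 r)
            - n%:R^-1 * omega1 w S i1 psi x)))
    =O_ (at_right (0:R)) (fun dx : R => dx ^+ 2)).
Proof.
move=> i1 M_unit _ eps1 lambda_gt0 _ _ n n_gt0 phi phi_smooth x.
have n_neq0 : n%:R != 0 :> R by rewrite pnatr_eq0 -lt0n.
split.
  have nl_gt0 : 0 < n%:R / lambda by rewrite divr_gt0 ?ltr0n.
  apply: bigO_sq_eqO.
  apply: (eq_bigO_sq _ (bigO_sq_scale nl_gt0 (taylor_fst x phi_smooth))) => h _.
  rewrite opprD addrA.
  by have -> : n%:R / lambda * h = n%:R * (h / lambda) by rewrite mulrAC -mulrA.
move=> psi om0; apply: bigO_sq_eqO.
have psi_smooth : smooth psi := smooth_slice 0 phi_smooth.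
apply: eq_bigO_sq (comb_eval_taylor (scheme_comb i1 M c s eps w S n i1) x psi_smooth).
move=> h _; rewrite /start_scheme scheme_combE // mass_scheme1 // moment_scheme //.
rewrite moment_scheme0 Gcoef_partial /om0.
by field.
Qed.
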